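(* Let $F,L,\Sigma,\alpha,\bar v$ be as below, and set $\bar\omega=\alpha+\bar v$. Fix $b\in(0,1)$. Let $\mathcal{P}^*$ be a solution of the convex program $$\min_{\mathcal{P}}\ -\log\det\mathcal{P}\quad\text{s.t.}\quad \mathcal{P}\succ 0\ \text{ and }\ \mathrm{(LMI)} .$$ Then: (i) the ellipsoid $\mathcal{E}^*=\{e: e^T\mathcal{P}^*e\le1\}$ contains the reachable set $\mathcal{R}$; (ii) among all ellipsoids $\{e: e^T\mathcal{P}e\le 1\}$ with $\mathcal{P}\succ0$ satisfying (LMI) for this $b$, the ellipsoid $\mathcal{E}^*$ has minimal volume.
   Context: $F\in\mathbb{R}^{n\times n}$, $L\in\mathbb{R}^{n\times m}$, $\Sigma\in\mathbb{R}^{m\times m}$ symmetric positive definite with symmetric square root $\Sigma^{1/2}$, and $\alpha,\bar v>0$. (LMI) denotes the matrix inequality $$\begin{bmatrix} b\mathcal{P} & F^T \mathcal{P} & 0 & 0 & 0 & 0\\ \mathcal{P} F & \mathcal{P} & \mathcal{P} & -\mathcal{P} L \Sigma^{1/2} & 0 & 0\\ 0 & \mathcal{P} & \tfrac{1-b}{\bar{\omega}}I & 0 & 0 & 0\\ 0 & -\Sigma^{1/2}L^T \mathcal{P} & 0 & \tfrac{1-b}{\bar{\omega}}I & 0 & 0\\ 0 & 0 & 0 & 0 & I & 0\\ 0 & 0 & 0 & 0 & 0 & I \end{bmatrix}\succeq 0 .$$ $\mathcal{R}$ is the set of all states $e_k$ ($k\in\mathbb{N}$) of $e_{k+1}=Fe_k-L\Sigma^{1/2}\zeta_k+v_k$,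 $e_1=0$, over all input sequences with $\|\zeta_k\|^2\le\alpha$ and $\|v_k\|^2\le\bar v$ for all $k$. The volume of $\{e:e^T\mathcal{P}e\le1\}$ is proportional to $(\det\mathcal{P})^{-1/2}$. *)

From HB Require Import structures.
From mathcomp Require Import all_boot all_order all_algebra.
Set Implicit Arguments. Unset Strict Implicit. Unset Printing Implicit Defensive.
Import Order.TTheory GRing.Theory Num.Theory.
Local Open Scope ring_scope.

Definition qform (R : rcfType) (k : nat) (M : 'M[R]_k) (x : 'cV[R]_k) : R :=
  (x^T *m M *m x) 0 0.

Definition sqnorm (R : rcfType) (k : nat) (x : 'cV[R]_k) : R := (x^T *m x) 0 0.

Definition psd (R : rcfType) (k : nat) (M : 'M[R]_k) : Prop :=
  M^T = M /\ forall x : 'cV[R]_k, 0 <= qform M x.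

Definition pd (R : rcfType) (k : nat) (M : 'M[R]_k) : Prop :=
  M^T = M /\ forall x : 'cV[R]_k, x != 0 -> 0 < qform M x.

(* The block matrix of (LMI), with S = Sigma^{1/2} and omega = alpha + vbar.
   Block sizes: n | n | n | m | n | n. *)
Definition LMI_mx (R : rcfType) (n m : nat) (F : 'M[R]_n) (L : 'M[R]_(n, m))
  (S : 'M[R]_m) (omega b : R) (P : 'M[R]_n) : 'M[R]_(n + n + (n + m) + (n + n)) :=
  let c := (1 - b) / omega in
  let A11 : 'M[R]_(n + n) := block_mx (b *: P) (F^T *m P) (P *m F) P in
  let A12 : 'M[R]_(n + n, n + m) := block_mx 0 0 P (- (P *m L *m S)) in
  let A21 : 'M[R]_(n + m, n + n) := block_mx 0 P 0 (- (S *m L^T *m P)) in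
  let A22 : 'M[R]_(n + m) := block_mx (c%:M) 0 0 (c%:M) in
  block_mx (block_mx A11 A12 A21 A22) 0 0 (1%:M : 'M[R]_(n + n)).

Definition LMI (R : rcfType) (n m : nat) (F : 'M[R]_n) (L : 'M[R]_(n, m))
  (S : 'M[R]_m) (omega b : R) (P : 'M[R]_n) : Prop :=
  psd (LMI_mx F L S omega b P).

(* traj k = e_{k+1} of e_{k+1} = F e_k - L S zeta_k + v_k, e_1 = 0
   (index shifted by one: traj 0 = e_1, zeta/v indexed from 0 = step 1). *)
Fixpoint traj (R : rcfType) (n m : nat) (F : 'M[R]_n) (L : 'M[R]_(n, m))
  (S : 'M[R]_m) (zeta : nat -> 'cV[R]_m) (v : nat -> 'cV[R]_n) (k : nat)
  : 'cV[R]_n :=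
  match k with
  | 0 => 0
  | k'.+1 => F *m traj F L S zeta v k' - L *m S *m zeta k' + v k'
  end.

Definition reachable (R : rcfType) (n m : nat) (F : 'M[R]_n) (L : 'M[R]_(n, m))
  (S : 'M[R]_m) (alpha vbar : R) (e : 'cV[R]_n) : Prop :=
  exists (zeta : nat -> 'cV[R]_m) (v : nat -> 'cV[R]_n) (k : nat),
    (forall j, sqnorm (zeta j) <= alpha) /\ (forall j, sqnorm (v j) <= vbar) /\
    e = traj F L S zeta v k.

(* volume of {e : e^T P e <= 1} up to the constant factor: (det P)^(-1/2) *)
Definition vol_factor (R : rcfType) (n : nat) (P : 'M[R]_n) : R :=
  (Num.sqrt (\det P))^-1.

(* The LMI is a Schur-complement form of the one-step dissipation inequality
     e'^T P e' <= b e^T P e + (1 - b)/omega (|v|^2 + |zeta|^2),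
   e' = F e - L S zeta + v, obtained by testing it against [e; -e'; v; zeta; 0].
   Since |zeta|^2 + |v|^2 <= alpha + vbar = omega, the ellipsoid {e^T P e <= 1}
   is invariant and contains e_1 = 0, so it contains the reachable set.
   Volume minimality is the monotonicity of det P |-> (det P)^(-1/2) on
   det P > 0, and det P > 0 for P > 0 by induction on the dimension,
   eliminating the leading pivot by a congruence with unit determinant. *)

From HB Require Import structures.
From mathcomp Require Import all_boot all_order all_algebra.
From mathcomp Require Import lra.
Set Implicit Arguments.
Unset Strict Implicit.
Unset Printing Implicit Defensive.

Import Order.TTheory GRing.Theory Num.Theory.
Local Open Scope ring_scope.

Section PositiveDefinite.
Variable R : rcfType.

Lemma trmx11 (A : 'M[R]_1) : A^T = A.
Proof. by rewrite [A]mx11_scalar tr_scalar_mx. Qed.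

Lemma qform_mulmx k (T P : 'M[R]_k) x :
  qform (T *m P *m T^T) x = qform P (T^T *m x).
Proof. by rewrite /qform trmx_mul trmxK !mulmxA. Qed.

Lemma pd_congr k (T P : 'M[R]_k) :
  T \in unitmx -> pd P -> pd (T *m P *m T^T).
Proof.
move=> Tu [Psym Ppos]; split; first by rewrite !trmx_mul trmxK Psym mulmxA.
move=> x x0; rewrite qform_mulmx; apply: Ppos.
apply: contra x0 => /eqP Tx0.
by rewrite -(mulKmx (_ : T^T \in unitmx) x) ?unitmx_tr // Tx0 mulmx0.
Qed.

Lemma pd_ulsubmx k l (P : 'M[R]_(k + l)) : pd P -> pd (ulsubmx P).
Proof.
move=> [Psym Ppos]; split; first by rewrite trmx_ulsub Psym.
move=> x x0; have := Ppos (col_mx x 0); rewrite col_mx_eq0 negb_and x0 => /(_ isT).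
rewrite /qform -{1}[P]submxK tr_col_mx trmx0 mul_row_block mul_row_col.
by rewrite !mul0mx !mulmx0 !addr0.
Qed.

Lemma pd_drsubmx k l (P : 'M[R]_(k + l)) : pd P -> pd (drsubmx P).
Proof.
move=> [Psym Ppos]; split; first by rewrite trmx_drsub Psym.
move=> x x0; have := Ppos (col_mx 0 x); rewrite col_mx_eq0 negb_and x0 orbT => /(_ isT).
rewrite /qform -{1}[P]submxK tr_col_mx trmx0 mul_row_block mul_row_col.
by rewrite !mul0mx !mulmx0 !add0r.
Qed.

Lemma pd1_gt0 (A : 'M[R]_1) : pd A -> 0 < A 0 0.
Proof.
case=> _ /(_ 1 (oner_neq0 _)).
by rewrite /qform trmx1 mul1mx mulmx1.
Qed.

Section Schur.
Variables (n : nat) (P : 'M[R]_(1 + n)).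
Hypothesis Psym : P^T = P.
Let a := ulsubmx P 0 0.
Hypothesis a_neq0 : a != 0.

Definition schur_complement1 : 'M[R]_n :=
  drsubmx P - a^-1 *: (dlsubmx P *m ursubmx P).

Definition pivot_elim : 'M[R]_(1 + n) :=
  block_mx 1 0 (- (a^-1 *: dlsubmx P)) 1.

Lemma det_pivot_elim : \det pivot_elim = 1.
Proof. by rewrite det_lblock !det1 mulr1. Qed.

Lemma pivot_elimE :
  pivot_elim *m P *m pivot_elim^T = block_mx a%:M 0 0 schur_complement1.
Proof.
have Ea : ulsubmx P = a%:M := mx11_scalar _.
have Eur : ursubmx P = (dlsubmx P)^T by rewrite trmx_dlsub Psym.
rewrite -{1}[P]submxK tr_block_mx !mulmx_block Ea.
rewrite !trmx0 !trmx1 !mul0mx !mulmx0 !mul1mx !mulmx1 !addr0 mul_mx_scalar mul_scalar_mx.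
rewrite scalerN scalerA mulfV // scale1r addNr mul0mx add0r.
rewrite linearN /= linearZ /= scalerN scalerA mulfV // scale1r -Eur addNr.
by rewrite /schur_complement1 mulNmx -scalemxAl addrC.
Qed.

Lemma det_schur_complement1 : \det P = a * \det schur_complement1.
Proof.
have := congr1 determinant pivot_elimE.
by rewrite !det_mulmx det_tr det_pivot_elim mul1r mulr1 det_ublock det_scalar1.
Qed.

End Schur.

Lemma pd_det_gt0 k (P : 'M[R]_k) : pd P -> 0 < \det P.
Proof.
elim: k P => [|k IH] P Ppd; first by rewrite det_mx00.
move: P Ppd; change (forall P : 'M[R]_(1 + k), pd P -> 0 < \det P) => P Ppd.
have a_gt0 : 0 < ulsubmx P 0 0 by apply/pd1_gt0/pd_ulsubmx.
have Psym : P^T = P by case: Ppd.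
rewrite det_schur_complement1 ?gt_eqF // mulr_gt0 // IH //.
have := pd_congr (_ : pivot_elim P \in unitmx) Ppd.
rewrite unitmxE det_pivot_elim unitr1 pivot_elimE ?gt_eqF // => /(_ isT).
by move/pd_drsubmx; rewrite block_mxKdr.
Qed.

End PositiveDefinite.

Section LMI.
Variables (R : rcfType) (n m : nat) (F : 'M[R]_n) (L : 'M[R]_(n, m)) (S : 'M[R]_m).
Variables (omega b : R).
Hypothesis Ssym : S^T = S.

(* The cross terms of the LMI at this vector collapse to -2 y^T P y. *)
Lemma qform_LMI_mx (P : 'M[R]_n) (e : 'cV[R]_n) (z : 'cV[R]_m) (v : 'cV[R]_n) :
  P^T = P ->
  let y := F *m e - L *m S *m z + v in
  qform (LMI_mx F L S omega b P) (col_mx (col_mx (col_mx e (- y)) (col_mx v z)) 0)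
  = b * qform P e + (1 - b) / omega * (sqnorm v + sqnorm z) - qform P y.
Proof.
move=> Psym y; set c := (1 - b) / omega.
have cross_sym k (x : 'cV_k) (M : 'M_(k, n)) : x^T *m M *m - y = (- y)^T *m M^T *m x.
  by rewrite -[LHS]trmx11 !trmx_mul trmxK mulmxA.
have trFP : (F^T *m P)^T = P *m F by rewrite trmx_mul trmxK Psym.
have trSLP : (- (S *m L^T *m P))^T = - (P *m L *m S).
  by rewrite linearN /= !trmx_mul trmxK Psym Ssym mulmxA.
have scale_form k (M : 'M[R]_k) (x : 'cV_k) (a : R) :
    x^T *m (a *: M) *m x = a *: (x^T *m M *m x).
  by rewrite -scalemxAr -scalemxAl.
have Nyy : (- y)^T *m P *m - y = y^T *m P *m y.
  by rewrite mulmxN linearN /= !mulNmx opprK.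
have Ny : (- y)^T *m P *m y = - (y^T *m P *m y) by rewrite linearN /= !mulNmx.
have row_lin (w : 'rV_n) :
    w *m (P *m F) *m e + w *m P *m v + w *m - (P *m L *m S) *m z = w *m P *m y.
  by rewrite /y !mulmxDr !mulmxN !mulNmx !mulmxA addrAC.
rewrite /qform /sqnorm /LMI_mx !tr_col_mx !mul_row_block !mul_row_col !trmx0.
rewrite !mul0mx !mulmx0 !addr0 !add_row_mx !mul_row_col !mulmxDl !mul0mx !add0r.
rewrite -/c scale_form !mul_mx_scalar -!scalemxAl Nyy !cross_sym trFP trSLP Psym.
move: (row_lin (- y)^T) Ny.
move: ((- y)^T *m (P *m F) *m e) ((- y)^T *m P *m v) ((- y)^T *m - (P *m L *m S) *m z).
move: ((- y)^T *m P *m y) (y^T *m P *m y) (e^T *m P *m e) (v^T *m v) (z^T *m z).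
move=> W Q E V Z A1 A2 A3.
move=> /(congr1 (fun M : 'M[R]_1 => M 0 0)) + /(congr1 (fun M : 'M[R]_1 => M 0 0)).
rewrite !mxE; lra.
Qed.

Lemma LMI_step (P : 'M[R]_n) (e : 'cV[R]_n) (z : 'cV[R]_m) (v : 'cV[R]_n) :
  P^T = P -> LMI F L S omega b P ->
  qform P (F *m e - L *m S *m z + v)
    <= b * qform P e + (1 - b) / omega * (sqnorm v + sqnorm z).
Proof.
move=> Psym [_ LMIpos].
have := LMIpos (col_mx (col_mx (col_mx e (- (F *m e - L *m S *m z + v))) (col_mx v z)) 0).
by rewrite qform_LMI_mx // subr_ge0.
Qed.

Lemma LMI_traj_qform_le1 (P : 'M[R]_n) (zeta : nat -> 'cV[R]_m) (v : nat -> 'cV[R]_n) :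
  P^T = P -> LMI F L S omega b P -> 0 < omega -> 0 <= b <= 1 ->
  (forall j, sqnorm (v j) + sqnorm (zeta j) <= omega) ->
  forall k, qform P (traj F L S zeta v k) <= 1.
Proof.
move=> Psym PLMI omega_gt0 /andP[b_ge0 b_le1] noise_le.
have c_ge0 : 0 <= (1 - b) / omega by rewrite divr_ge0 ?subr_ge0 // ltW.
elim=> [|k IH] /=; first by rewrite /qform mulmx0 mxE.
apply: le_trans (LMI_step _ _ _ Psym PLMI) _.
have noise_term : (1 - b) / omega * (sqnorm (v k) + sqnorm (zeta k)) <= 1 - b.
  by rewrite -[leRHS](divfK (lt0r_neq0 omega_gt0)) ler_wpM2l.
have state_term : b * qform P (traj F L S zeta v k) <= b.
  by rewrite -[leRHS]mulr1 ler_wpM2l.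
by apply: le_trans (lerD state_term noise_term) _; rewrite addrC subrK.
Qed.

End LMI.

Lemma vol_factor_le (R : rcfType) n (P Q : 'M[R]_n) :
  0 < \det P -> \det P <= \det Q -> vol_factor Q <= vol_factor P.
Proof.
move=> detP_gt0 detPQ; have detQ_gt0 := lt_le_trans detP_gt0 detPQ.
by rewrite /vol_factor lef_pV2 ?posrE ?sqrtr_gt0 // ler_sqrt // ltW.
Qed.

Theorem corollary1 (R : rcfType) (n m : nat)
  (F : 'M[R]_n) (L : 'M[R]_(n, m)) (Sigma S : 'M[R]_m) (alpha vbar b : R)
  (Pstar : 'M[R]_n) :
  pd Sigma -> S^T = S -> S *m S = Sigma ->
  0 < alpha -> 0 < vbar -> 0 < b < 1 ->
  (* Pstar solves  min_P -log det P  s.t.  P > 0 and (LMI);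
     since log is strictly increasing, -log det P >= -log det Pstar
     is expressed as det P <= det Pstar *)
  pd Pstar -> LMI F L S (alpha + vbar) b Pstar ->
  (forall P : 'M[R]_n, pd P -> LMI F L S (alpha + vbar) b P ->
     \det P <= \det Pstar) ->
  (forall e : 'cV[R]_n, reachable F L S alpha vbar e -> qform Pstar e <= 1) /\
  (forall P : 'M[R]_n, pd P -> LMI F L S (alpha + vbar) b P ->
     vol_factor Pstar <= vol_factor P).
Proof.
(* Only the symmetry of S = Sigma^(1/2) is used; the hypotheses on Sigma are not. *)
move=> _ Ssym _ alpha_gt0 vbar_gt0 /andP[b_gt0 b_lt1] [Psym _] PLMI Pmin; split.
  move=> e [zeta [v [k [zeta_le [v_le ->]]]]].
  apply: (LMI_traj_qform_le1 Ssym Psym PLMI).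
  - by rewrite addr_gt0.
  - by rewrite !ltW.
  - by move=> j; rewrite addrC lerD.
by move=> P Ppd PLMI'; apply: vol_factor_le (pd_det_gt0 Ppd) (Pmin P Ppd PLMI').
Qed.
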